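(* Consider the active-subspace NMPC scheme (Algorithm 1, described in the context below) based on the reduced problem $\widehat{\mathscr{P}}(x_k,\tilde{\mathbf{w}}_k)$, in which the shift-based update of the feasible guess is replaced by $\tilde{\mathbf{u}}_{k+1}=F(\mathbf{u}_k)$ for a generic constructor of feasible guesses $F:\mathbb{U}^N\to\mathbb{U}^N$. Then this active-subspace NMPC scheme is recursively feasible, i.e., whenever $\widehat{\mathscr{P}}(x_k,\tilde{\mathbf{w}}_k)$ is feasible, so is $\widehat{\mathscr{P}}(x_{k+1},\tilde{\mathbf{w}}_{k+1})$.
   Context: System: $x^+=f(x,u)$ with continuous $f:\mathbb{X}\times\mathbb{U}\to\mathbb{X}$, $\mathbb{X}\subseteq\mathbb{R}^n$, $\mathbb{U}\subseteq\mathbb{R}^m$ closed, containing the origin in their interior; nominal setting $x_{k+1}=f(x_k,u_{k|k})$. $\mathscr{P}(x_k)$: the finite-horizon ($N$) optimal control problem of minimizing $\sum_{i=0}^{N-1}\ell(x_{k+i|k},u_{k+i|k})+V_f(x_{k+N|k})$ over $\mathbf{u}_k=[u_{k|k}^\top,\dots,u_{k+N-1|k}^\top]^\top$ subject to $x_{k|k}=x_k$, $x_{k+i+1|k}=f(x_{k+i|k},u_{k+i|k})$, $u_{k+i|k}\in\mathbb{U}$, $x_{k+i|k}\in\mathbb{X}$, $x_{k+N|k}\in\mathbb{X}_f$; after eliminating states: $\min_{\mathbf{u}_k}J(x_k,\mathbf{u}_k)$ s.t. $g(x_k,\mathbf{u}_k)\le0$. Generic constructor for feasible guesses: a map $F:\mathbb{U}^N\to\mathbb{U}^N$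 such that, whenever $\mathbf{u}_k$ is feasible for $\mathscr{P}(x_k)$ (the predicted control sequence at time $k$), $F(\mathbf{u}_k)$ is feasible for $\mathscr{P}(x_{k+1})$ with $x_{k+1}=f(x_k,u_{k|k})$. $T=[T_1\ T_2]\in\mathbb{R}^{Nm\times Nm}$ orthonormal, $T_1$ with $q$ columns. Reduced problem $\widehat{\mathscr{P}}(x_k,\tilde{\mathbf{w}}_k)$: minimize $J(x_k,T_1\mathbf{v}_k+\mu_kT_2\tilde{\mathbf{w}}_k)$ over $(\mathbf{v}_k,\mu_k)\in\mathbb{R}^q\times\mathbb{R}$ subject to $g(x_k,T_1\mathbf{v}_k+\mu_kT_2\tilde{\mathbf{w}}_k)\le0$. Algorithm (modified Algorithm 1): at $k=0$ solve $\mathscr{P}(x_0)$ for a feasible $\tilde{\mathbf{u}}_0$, set $\tilde{\mathbf{w}}_0=T_2^\top\tilde{\mathbf{u}}_0$. At each $k$: solve $\widehat{\mathscr{P}}(x_k,\tilde{\mathbf{w}}_k)$ for $(\mathbf{v}_k^\star,\mu_k^\star)$; if $J(x_k,T_1\mathbf{v}_k^\star+\mu_k^\star T_2\tilde{\mathbf{w}}_k)\le J(x_k,\tilde{\mathbf{u}}_k)$ set $\mathbf{u}_k=T_1\mathbf{v}_k^\star+\mu_k^\star T_2\tilde{\mathbf{w}}_k$, else $\mathbf{u}_k=\tilde{\mathbf{u}}_k$; apply $u_{k|k}$; set $\tilde{\mathbf{u}}_{k+1}=F(\mathbf{u}_k)$ and $\tilde{\mathbf{w}}_{k+1}=T_2^\top\tilde{\mathbf{u}}_{k+1}$.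 *)

From HB Require Import structures.
From mathcomp Require Import all_boot all_order all_algebra.
From mathcomp Require Import all_classical all_reals all_analysis.
Set Implicit Arguments. Unset Strict Implicit. Unset Printing Implicit Defensive.
Import Order.TTheory GRing.Theory Num.Theory.
Local Open Scope ring_scope.

(* A stacked control sequence u = [u_{k|k}^T, ..., u_{k+N-1|k}^T]^T is a
   column vector of size N*m; block i (i < N) is the i-th row of vec_mx u^T,
   i.e. the entries i*m, ..., i*m+m-1. Out of range blocks are 0 (never used). *)
Definition ublk (R : realType) (m N : nat) (u : 'cV[R]_(N * m)) (i : nat)
  : 'rV[R]_m :=
  if @insub nat (fun j => j < N)%N 'I_N i is Some i' then row i' (vec_mx u^T)
  else 0.

Fixpoint pstate (R : realType) (n m N : nat)
  (f : 'rV[R]_n -> 'rV[R]_m -> 'rV[R]_n) (x : 'rV[R]_n) (u : 'cV[R]_(N * m))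
  (i : nat) : 'rV[R]_n :=
  match i with
  | 0 => x
  | i'.+1 => f (pstate f x u i') (ublk u i')
  end.

Definition feasibleP (R : realType) (n m N : nat)
  (f : 'rV[R]_n -> 'rV[R]_m -> 'rV[R]_n)
  (X : set 'rV[R]_n) (U : set 'rV[R]_m) (Xf : set 'rV[R]_n)
  (x : 'rV[R]_n) (u : 'cV[R]_(N * m)) : Prop :=
  (forall i, (i < N)%N -> U (ublk u i) /\ X (pstate f x u i))
  /\ Xf (pstate f x u N).

Definition Jcost (R : realType) (n m N : nat)
  (f : 'rV[R]_n -> 'rV[R]_m -> 'rV[R]_n)
  (ell : 'rV[R]_n -> 'rV[R]_m -> R) (Vf : 'rV[R]_n -> R)
  (x : 'rV[R]_n) (u : 'cV[R]_(N * m)) : R :=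
  \sum_(i < N) ell (pstate f x u i) (ublk u i) + Vf (pstate f x u N).

Definition red_ctrl (R : realType) (m N q p : nat)
  (T1 : 'M[R]_(N * m, q)) (T2 : 'M[R]_(N * m, p))
  (w : 'cV[R]_p) (v : 'cV[R]_q) (mu : R) : 'cV[R]_(N * m) :=
  T1 *m v + mu *: (T2 *m w).

Definition feasibleRed (R : realType) (n m N q p : nat)
  (f : 'rV[R]_n -> 'rV[R]_m -> 'rV[R]_n)
  (X : set 'rV[R]_n) (U : set 'rV[R]_m) (Xf : set 'rV[R]_n)
  (T1 : 'M[R]_(N * m, q)) (T2 : 'M[R]_(N * m, p))
  (x : 'rV[R]_n) (w : 'cV[R]_p) : Prop :=
  exists (v : 'cV[R]_q) (mu : R), feasibleP f X U Xf x (red_ctrl T1 T2 w v mu).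

From HB Require Import structures.
From mathcomp Require Import all_boot all_order all_algebra.
From mathcomp Require Import all_classical all_reals all_analysis.
Import Order.TTheory GRing.Theory Num.Theory.
Import numFieldNormedType.Exports.

Set Implicit Arguments.
Unset Strict Implicit.
Local Open Scope ring_scope.
Local Open Scope classical_set_scope.

(* Because [T] is orthogonal, every control sequence [w] splits as
   [w = T1 (T1^T w) + 1 * T2 (T2^T w)], so the reduced problem built from a
   guess always contains that guess, with [(v, mu) = (T1^T w, 1)]. Hence it
   suffices that the guesses [ut k] stay feasible along the closed loop: the
   applied sequence [u k] is either [ut k] or a solution of the reduced
   problem, and [F] carries a feasible sequence at [x k] to a feasible one at
   [x k.+1]. *)

Lemma row_mx_mul_tr (R : pzRingType) (M q p : nat)
    (T1 : 'M[R]_(M, q)) (T2 : 'M[R]_(M, p)) :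
  row_mx T1 T2 *m (row_mx T1 T2)^T = T1 *m T1^T + T2 *m T2^T.
Proof. by rewrite tr_row_mx mul_row_col. Qed.

Lemma red_ctrl_guess (R : realType) (m N q p : nat)
    (T1 : 'M[R]_(N * m, q)) (T2 : 'M[R]_(N * m, p)) (w : 'cV[R]_(N * m)) :
  row_mx T1 T2 *m (row_mx T1 T2)^T = 1%:M ->
  red_ctrl T1 T2 (T2^T *m w) (T1^T *m w) 1 = w.
Proof.
rewrite row_mx_mul_tr => T_orth.
by rewrite /red_ctrl scale1r !mulmxA -mulmxDl T_orth mul1mx.
Qed.

Lemma feasibleRed_guess (R : realType) (n m N q p : nat)
    (f : 'rV[R]_n -> 'rV[R]_m -> 'rV[R]_n)
    (X : set 'rV[R]_n) (U : set 'rV[R]_m) (Xf : set 'rV[R]_n)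
    (T1 : 'M[R]_(N * m, q)) (T2 : 'M[R]_(N * m, p))
    (x : 'rV[R]_n) (w : 'cV[R]_(N * m)) :
  row_mx T1 T2 *m (row_mx T1 T2)^T = 1%:M ->
  feasibleP f X U Xf x w -> feasibleRed f X U Xf T1 T2 x (T2^T *m w).
Proof. by move=> T_orth w_feas; exists (T1^T *m w), 1; rewrite red_ctrl_guess. Qed.

Section ClosedLoop.

Variables (R : realType) (n m N q p : nat).
Variable f : 'rV[R]_n -> 'rV[R]_m -> 'rV[R]_n.
Variables (X : set 'rV[R]_n) (U : set 'rV[R]_m) (Xf : set 'rV[R]_n).
Variables (ell : 'rV[R]_n -> 'rV[R]_m -> R) (Vf : 'rV[R]_n -> R).
Variables (T1 : 'M[R]_(N * m, q)) (T2 : 'M[R]_(N * m, p)).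
Variable F : 'cV[R]_(N * m) -> 'cV[R]_(N * m).
Variables (x : nat -> 'rV[R]_n) (ut u : nat -> 'cV[R]_(N * m)).
Variables (vs : nat -> 'cV[R]_q) (mus : nat -> R).

Let ured k := red_ctrl T1 T2 (T2^T *m ut k) (vs k) (mus k).

Hypothesis T_orth : row_mx T1 T2 *m (row_mx T1 T2)^T = 1%:M.
Hypothesis F_feasible : forall xk uk, feasibleP f X U Xf xk uk ->
  feasibleP f X U Xf (f xk (ublk uk 0)) (F uk).
Hypothesis ut0_feasible : feasibleP f X U Xf (x 0%N) (ut 0%N).
Hypothesis ured_feasible : forall k,
  feasibleRed f X U Xf T1 T2 (x k) (T2^T *m ut k) ->
  feasibleP f X U Xf (x k) (ured k).
Hypothesis u_select : forall k, u k =
  if Jcost f ell Vf (x k) (ured k) <= Jcost f ell Vf (x k) (ut k)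
  then ured k else ut k.
Hypothesis x_next : forall k, x k.+1 = f (x k) (ublk (u k) 0).
Hypothesis ut_next : forall k, ut k.+1 = F (u k).

Lemma applied_feasible k :
  feasibleP f X U Xf (x k) (ut k) -> feasibleP f X U Xf (x k) (u k).
Proof.
move=> ut_feas; rewrite u_select; case: ifP => // _.
exact/ured_feasible/feasibleRed_guess.
Qed.

Lemma guess_feasible k : feasibleP f X U Xf (x k) (ut k).
Proof.
elim: k => [|k IHk]; first exact: ut0_feasible.
by rewrite x_next ut_next; apply/F_feasible/applied_feasible.
Qed.

End ClosedLoop.

Theorem corollary1 (R : realType) (n m N q p : nat)
  (f : 'rV[R]_n -> 'rV[R]_m -> 'rV[R]_n)
  (X : set 'rV[R]_n) (U : set 'rV[R]_m) (Xf : set 'rV[R]_n)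
  (ell : 'rV[R]_n -> 'rV[R]_m -> R) (Vf : 'rV[R]_n -> R)
  (T1 : 'M[R]_(N * m, q)) (T2 : 'M[R]_(N * m, p))
  (F : 'cV[R]_(N * m) -> 'cV[R]_(N * m))
  (x : nat -> 'rV[R]_n) (ut u : nat -> 'cV[R]_(N * m))
  (vs : nat -> 'cV[R]_q) (mus : nat -> R) :
  (* standing assumptions on the system *)
  closed X -> closed U -> interior X 0%R -> interior U 0%R ->
  (forall a b, X a -> U b -> X (f a b)) ->
  {within [set z | X z.1 /\ U z.2], continuous (fun z => f z.1 z.2)} ->
  (* T = [T1 T2] square orthonormal, T1 with q columns *)
  (q + p)%N = (N * m)%N ->
  (row_mx T1 T2)^T *m row_mx T1 T2 = 1%:M ->
  row_mx T1 T2 *m (row_mx T1 T2)^T = 1%:M ->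
  (* F : U^N -> U^N is a generic constructor of feasible guesses *)
  (forall uu, (forall i, (i < N)%N -> U (ublk uu i)) ->
     forall i, (i < N)%N -> U (ublk (F uu) i)) ->
  (forall xk uk, feasibleP f X U Xf xk uk ->
     feasibleP f X U Xf (f xk (ublk uk 0)) (F uk)) ->
  (* closed loop generated by the modified Algorithm 1 *)
  feasibleP f X U Xf (x 0%N) (ut 0%N) ->
  (forall k, feasibleRed f X U Xf T1 T2 (x k) (T2^T *m ut k) ->
     feasibleP f X U Xf (x k) (red_ctrl T1 T2 (T2^T *m ut k) (vs k) (mus k))) ->
  (forall k, u k =
     if Jcost f ell Vf (x k) (red_ctrl T1 T2 (T2^T *m ut k) (vs k) (mus k))
          <= Jcost f ell Vf (x k) (ut k)
     then red_ctrl T1 T2 (T2^T *m ut k) (vs k) (mus k) else ut k) ->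
  (forall k, x k.+1 = f (x k) (ublk (u k) 0)) ->
  (forall k, ut k.+1 = F (u k)) ->
  (* recursive feasibility *)
  forall k, feasibleRed f X U Xf T1 T2 (x k) (T2^T *m ut k) ->
    feasibleRed f X U Xf T1 T2 (x k.+1) (T2^T *m ut k.+1).
Proof.
move=> _ _ _ _ _ _ _ _ T_orth _ F_feasible ut0_feasible ured_feasible u_select
  x_next ut_next k _.
apply: (feasibleRed_guess T_orth).
exact: (guess_feasible T_orth F_feasible ut0_feasible ured_feasible u_select
  x_next ut_next k.+1).
Qed.
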